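(* Let $H_{\mathcal L,\Theta}$ be a Hamburger Hamiltonian with $N<\infty$ and let $m$ be its Weyl--Titchmarsh function. Let $\kappa$ be the number of $k\in\{1,\dots,N\}$ with $\theta_k\notin\pi\mathbb Z$, and for $j\in\{0,\dots,\kappa\}$ let $k(j)$ be the largest integer $k\in\{0,\dots,N\}$ such that exactly $j$ of $\theta_0,\dots,\theta_{k-1}$ are not in $\pi\mathbb Z$. Define $l_j:=\ell_{k(j)}\sin^2(\theta_{k(j)})$ for $j\in\{0,\dots,\kappa\}$ and, for $j\in\{0,\dots,\kappa-1\}$, $\omega_j:=\cot(\theta_{k(j+1)})-\cot(\theta_{k(j)})$ and $\upsilon_j:=0$ if $k(j+1)-k(j)=1$, $\upsilon_j:=\ell_{k(j)+1}$ if $k(j+1)-k(j)=2$ (these are the only possibilities). Then for all $z\in\mathbb C\setminus\mathbb R$, $$m(z)=\cfrac{1}{-l_0z+\cfrac{1}{\omega_0+\upsilon_0z+\cfrac{1}{\ddots+\cfrac{1}{\omega_{\kappa-1}+\upsilon_{\kappa-1}z+\cfrac{1}{-l_\kappa z}}}}},$$ where $\frac{1}{-l_\kappa z}$ is interpreted as $0$ if $l_\kappa=\infty$.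
   Context: For $\theta\in\mathbb R$ let $H_\theta:=\begin{pmatrix}\cos^2\theta&\cos\theta\sin\theta\\ \cos\theta\sin\theta&\sin^2\theta\end{pmatrix}$. Hamburger Hamiltonian: fix $L\in(0,\infty]$, $N\in\mathbb Z_{\ge0}\cup\{\infty\}$, reals $\{\ell_k\}_{k=0}^{N-1}$ and $\{\theta_k\}_{k=0}^{N}$ with $\theta_0=\pi/2$, $\ell_k>0$ and $\theta_k<\theta_{k+1}<\theta_k+\pi$ for $k\in\{0,\dots,N-1\}$. Set $x_{-1}:=0$, $x_k:=x_{k-1}+\ell_k$. If $N<\infty$, assume $x_{N-1}<x_N:=L$ (and put $\ell_N:=L-x_{N-1}\in(0,\infty]$) and $\theta_N\notin\pi\mathbb Z$; if $N=\infty$, $L:=\sum_{k\ge0}\ell_k$. Then $H_{\mathcal L,\Theta}(x):=\sum_{k=0}^N H_{\theta_k}\mathbb 1_{[x_{k-1},x_k)}(x)$, $x\in[0,L)$. Its Weyl--Titchmarsh function is $m(z):=\lim_{x\to L}U_{11}(z,x)/U_{12}(z,x)$, $z\in\mathbb C\setminus\mathbb R$, where $U(z,\cdot)$ solves $U(z,x)=I-z\int_0^xJH_{\mathcal L,\Theta}(t)U(z,t)\,dt$, $J=\begin{pmatrix}0&1\\-1&0\end{pmatrix}$. *)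

From Stdlib Require Import Reals ClassicalDescription Lia.
Open Scope R_scope.

Definition Cx : Type := (R * R)%type.
Definition Re (z : Cx) : R := fst z.
Definition Im (z : Cx) : R := snd z.
Definition RtoC (a : R) : Cx := (a, 0).
Definition Cadd (u v : Cx) : Cx := (Re u + Re v, Im u + Im v).
Definition Copp (u : Cx) : Cx := (- Re u, - Im u).
Definition Cmul (u v : Cx) : Cx :=
  (Re u * Re v - Im u * Im v, Re u * Im v + Im u * Re v).
Definition Cinv (u : Cx) : Cx :=
  (Re u / (Re u ^ 2 + Im u ^ 2), - Im u / (Re u ^ 2 + Im u ^ 2)).
Definition Cdiv (u v : Cx) : Cx := Cmul u (Cinv v).
Definition Cnorm (u : Cx) : R := sqrt (Re u ^ 2 + Im u ^ 2).

(* A 2x2 matrix is a function of indices i j in {0,1}. *)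
Definition Hmat (th : R) (i j : nat) : R :=
  match i, j with
  | 0%nat, 0%nat => cos th ^ 2
  | 0%nat, 1%nat => cos th * sin th
  | 1%nat, 0%nat => cos th * sin th
  | _, _ => sin th ^ 2
  end.
Definition Jmat (i j : nat) : R :=
  match i, j with
  | 0%nat, 1%nat => 1
  | 1%nat, 0%nat => -1
  | _, _ => 0
  end.
Definition JHmat (th : R) (i j : nat) : R :=
  Jmat i 0 * Hmat th 0 j + Jmat i 1 * Hmat th 1 j.

(* X k = x_{k-1} = l_0 + ... + l_{k-1}  (so X 0 = x_{-1} = 0) *)
Fixpoint X (ell : nat -> R) (k : nat) : R :=
  match k with 0%nat => 0 | S k' => X ell k' + ell k' end.

(* index of the interval [x_{k-1}, x_k) containing t (intervals k<N) ;
   = N on [x_{N-1}, L) *)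
Fixpoint idx_aux (ell : nat -> R) (t : R) (n : nat) : nat :=
  match n with
  | 0%nat => 0%nat
  | S n' => (idx_aux ell t n' + (if Rle_dec (X ell (S n')) t then 1 else 0))%nat
  end.
Definition idx (N : nat) (ell : nat -> R) (t : R) : nat := idx_aux ell t N.

Definition Ham (N : nat) (ell th : nat -> R) (t : R) : nat -> nat -> R :=
  Hmat (th (idx N ell t)).
Definition JHam (N : nat) (ell th : nat -> R) (t : R) : nat -> nat -> R :=
  JHmat (th (idx N ell t)).

(* L : option R, None meaning L = +infinity *)
Definition in_dom (L : option R) (x : R) : Prop :=
  0 <= x /\ match L with Some L0 => x < L0 | None => True end.

Definition delta (i j : nat) : Cx := if Nat.eqb i j then RtoC 1 else RtoC 0.

(* U : R -> (2x2 complex matrix) solves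
   U(z,x) = I - z int_0^x J H(t) U(z,t) dt   for all x in [0,L),
   the integral being the (Riemann) integral of real and imaginary parts. *)
Definition solves_IE (N : nat) (ell th : nat -> R) (L : option R) (z : Cx)
    (U : R -> nat -> nat -> Cx) : Prop :=
  forall x, in_dom L x -> forall i j, (i < 2)%nat -> (j < 2)%nat ->
    exists (pre : Riemann_integrable
             (fun t => JHam N ell th t i 0 * Re (U t 0%nat j)
                     + JHam N ell th t i 1 * Re (U t 1%nat j)) 0 x)
           (pim : Riemann_integrable
             (fun t => JHam N ell th t i 0 * Im (U t 0%nat j)
                     + JHam N ell th t i 1 * Im (U t 1%nat j)) 0 x),
      U x i j = Cadd (delta i j) (Copp (Cmul z (RiemannInt pre, RiemannInt pim))).

Definition tends_to_L (L : option R) (f : R -> Cx) (c : Cx) : Prop :=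
  match L with
  | Some L0 => forall eps, 0 < eps -> exists delta, 0 < delta /\
      forall x, in_dom L x -> L0 - delta < x -> Cnorm (Cadd (f x) (Copp c)) < eps
  | None => forall eps, 0 < eps -> exists M,
      forall x, in_dom L x -> M <= x -> Cnorm (Cadd (f x) (Copp c)) < eps
  end.

Definition in_piZ (t : R) : Prop := exists n : Z, t = IZR n * PI.
Definition notpiZb (t : R) : nat :=
  if excluded_middle_informative (in_piZ t) then 0%nat else 1%nat.

Fixpoint cnt_from (th : nat -> R) (a n : nat) : nat :=
  match n with 0%nat => 0%nat | S n' => (cnt_from th a n' + notpiZb (th (a + n')%nat))%nat end.

Definition kappa (N : nat) (th : nat -> R) : nat := cnt_from th 1 N.

(* largest k in {0..n} with exactly j of theta_0..theta_{k-1} not in pi Z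
   (returns 0 if none) *)
Fixpoint kj_aux (th : nat -> R) (j n : nat) : nat :=
  match n with
  | 0%nat => 0%nat
  | S n' => if Nat.eqb (cnt_from th 0 (S n')) j then S n' else kj_aux th j n'
  end.
Definition kj (N : nat) (th : nat -> R) (j : nat) : nat := kj_aux th j N.

Definition cot (t : R) : R := cos t / sin t.

(* ell_k as extended real: None = +infinity; ell_N = L - x_{N-1} *)
Definition ellx (N : nat) (ell : nat -> R) (L : option R) (k : nat) : option R :=
  if Nat.ltb k N then Some (ell k)
  else match L with Some L0 => Some (L0 - X ell N) | None => None end.

Definition lj (N : nat) (ell th : nat -> R) (L : option R) (j : nat) : option R :=
  match ellx N ell L (kj N th j) with
  | Some a => Some (a * sin (th (kj N th j)) ^ 2)
  | None => None
  end.

Definition omegaj (N : nat) (th : nat -> R) (j : nat) : R :=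
  cot (th (kj N th (S j))) - cot (th (kj N th j)).

Definition upsj (N : nat) (ell th : nat -> R) (j : nat) : R :=
  if Nat.eqb (kj N th (S j) - kj N th j) 1 then 0 else ell (S (kj N th j)).

Definition inv_mlz (l : option R) (z : Cx) : Cx :=
  match l with Some a => Cinv (Cmul (RtoC (- a)) z) | None => RtoC 0 end.

Fixpoint cfrac (N : nat) (ell th : nat -> R) (L : option R) (z : Cx) (n j : nat) : Cx :=
  match n with
  | 0%nat => inv_mlz (lj N ell th L j) z
  | S n' =>
    let lz := match lj N ell th L j with
              | Some a => Cmul (RtoC (- a)) z | None => RtoC 0 end in
    Cinv (Cadd lz
      (Cinv (Cadd (Cadd (RtoC (omegaj N th j)) (Cmul (RtoC (upsj N ell th j)) z))
                  (cfrac N ell th L z n' (S j)))))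
  end.

From Stdlib Require Import Reals Lra Lia Psatz Field ClassicalDescription.
From Coquelicot Require Import Hierarchy RInt.
Open Scope R_scope.

(* The continued fraction is peeled off from its end: on each constancy
   interval of the Hamiltonian the integral equation forces U to be affine,
   because (J H_theta)^2 = 0, so U at x_k is a product of transfer matrices
   T_k = I - z l_k J H_{theta_k}.  Multiplying the first row of the last
   factor through these matrices from N down to 0, each theta_{k(j)} not in
   pi Z turns the ratio of the two entries, written as cot theta + g, into
   cot theta' + 1/(-l z + 1/(omega + upsilon z + g)), where an intermediate
   theta in pi Z contributes the upsilon z term.  All g stay in the
   half-plane of z, which keeps every denominator nonzero, and at x = 0 the
   ratio is the continued fraction itself since cot theta_0 = 0.  Finally U_11/U_12
   on the last interval is a ratio of affine functions of x, whose limit at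
   L is the value at L, resp. the ratio of the slopes if L is infinite. *)

Notation Czero := (RtoC 0).
Notation Cone := (RtoC 1).

Definition Csub (a b : Cx) : Cx := Cadd a (Copp b).

Lemma Cx_ext (a b : Cx) : Re a = Re b -> Im a = Im b -> a = b.
Proof. destruct a, b; unfold Re, Im; simpl; intros; subst; auto. Qed.

Ltac Cx_ext_unfold :=
  apply Cx_ext; unfold Cadd, Cmul, Copp, Csub, RtoC, Re, Im; simpl.

Ltac Cx_ext_all :=
  repeat match goal with c : Cx |- _ => destruct c end; Cx_ext_unfold.

Lemma Cx_ring_theory : ring_theory Czero Cone Cadd Cmul Csub Copp (@eq Cx).
Proof. constructor; intros; Cx_ext_all; ring. Qed.

Lemma Cnorm2_gt0 (a : Cx) : a <> Czero -> 0 < Re a ^ 2 + Im a ^ 2.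
Proof.
  destruct a as [x y]; unfold Re, Im; simpl; intros Ha.
  destruct (Req_dec x 0) as [-> | Hx]; [destruct (Req_dec y 0) as [-> | Hy] |].
  - now destruct Ha.
  - nra.
  - nra.
Qed.

Lemma Cx_field_theory :
  field_theory Czero Cone Cadd Cmul Csub Copp Cdiv Cinv (@eq Cx).
Proof.
  constructor.
  - exact Cx_ring_theory.
  - unfold RtoC; intro H; injection H; lra.
  - reflexivity.
  - intros p Hp; pose proof (Cnorm2_gt0 p Hp) as Hn; destruct p as [x y].
    unfold Re, Im in Hn; simpl in Hn.
    Cx_ext_unfold; field; lra.
Qed.

Add Field Cx_field : Cx_field_theory.

Lemma RtoC_mul a b : RtoC (a * b) = Cmul (RtoC a) (RtoC b).
Proof. Cx_ext_unfold; ring. Qed.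

Lemma RtoC_opp a : RtoC (- a) = Copp (RtoC a).
Proof. Cx_ext_unfold; ring. Qed.

Lemma RtoC_sub a b : RtoC (a - b) = Csub (RtoC a) (RtoC b).
Proof. Cx_ext_unfold; ring. Qed.

Lemma RtoC_neq0 a : a <> 0 -> RtoC a <> Czero.
Proof. intros H E; apply H; unfold RtoC in E; injection E; auto. Qed.

Lemma Cmul_neq0 a b : a <> Czero -> b <> Czero -> Cmul a b <> Czero.
Proof.
  intros Ha Hb E.
  assert (H : Cmul (Cmul a b) (Cmul (Cinv a) (Cinv b)) = Cone) by (field; auto).
  rewrite E in H; unfold Cmul, RtoC in H; simpl in H; injection H; intros; lra.
Qed.

Lemma Cneq0_Im a : Im a <> 0 -> a <> Czero.
Proof. intros H E; subst; apply H; reflexivity. Qed.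

Lemma Im_RtoC_mul r a : Im (Cmul (RtoC r) a) = r * Im a.
Proof. unfold Cmul, RtoC, Im, Re; simpl; ring. Qed.

Lemma Im_Cinv_mul (a : Cx) (y : R) : a <> Czero ->
  Im (Cinv a) * y = - (Im a * y) * / (Re a ^ 2 + Im a ^ 2).
Proof. intros; unfold Cinv, Im at 1; simpl; unfold Rdiv; ring. Qed.

Lemma Cnorm_ge0 a : 0 <= Cnorm a.
Proof. apply sqrt_pos. Qed.

Lemma Cnorm_gt0 a : a <> Czero -> 0 < Cnorm a.
Proof. intros H; apply sqrt_lt_R0, Cnorm2_gt0, H. Qed.

Lemma Cnorm0 : Cnorm Czero = 0.
Proof.
  unfold Cnorm, RtoC, Re, Im; simpl.
  replace (0 * (0 * 1) + 0 * (0 * 1)) with 0 by ring; apply sqrt_0.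
Qed.

Lemma Cnorm_mul a b : Cnorm (Cmul a b) = Cnorm a * Cnorm b.
Proof.
  unfold Cnorm; rewrite <- sqrt_mult by (apply Rplus_le_le_0_compat; apply pow2_ge_0).
  f_equal; destruct a, b; unfold Cmul, Re, Im; simpl; ring.
Qed.

Lemma Cnorm_RtoC r : Cnorm (RtoC r) = Rabs r.
Proof.
  unfold Cnorm, RtoC, Re, Im; simpl.
  replace (r * (r * 1) + 0 * (0 * 1)) with (r * r) by ring; apply sqrt_Rsqr_abs.
Qed.

Lemma Cnorm_inv a : a <> Czero -> Cnorm (Cinv a) = / Cnorm a.
Proof.
  intros H; pose proof (Cnorm_gt0 a H).
  assert (E : Cnorm a * Cnorm (Cinv a) = 1).
  { rewrite <- Cnorm_mul; replace (Cmul a (Cinv a)) with Cone by (field; auto).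
    rewrite Cnorm_RtoC; apply Rabs_R1. }
  apply Rmult_eq_reg_l with (Cnorm a); [rewrite E; field |]; lra.
Qed.

Lemma Cnorm_triangle a b : Cnorm (Cadd a b) <= Cnorm a + Cnorm b.
Proof.
  destruct a as [x y], b as [u v]; unfold Cnorm, Cadd, Re, Im; simpl.
  set (p := sqrt (x * (x * 1) + y * (y * 1))).
  set (q := sqrt (u * (u * 1) + v * (v * 1))).
  assert (Hp : 0 <= p) by apply sqrt_pos.
  assert (Hq : 0 <= q) by apply sqrt_pos.
  assert (Ep : p * p = x * x + y * y)
    by (unfold p; rewrite sqrt_sqrt; [ring | nra]).
  assert (Eq : q * q = u * u + v * v)
    by (unfold q; rewrite sqrt_sqrt; [ring | nra]).
  assert (Cauchy_Schwarz : x * u + y * v <= p * q).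
  { assert ((x * u + y * v) * (x * u + y * v) <= (p * q) * (p * q))
      by (replace ((p * q) * (p * q)) with ((p * p) * (q * q)) by ring;
          rewrite Ep, Eq; pose proof (Rle_0_sqr (x * v - y * u));
          unfold Rsqr in *; nra).
    assert (0 <= p * q) by nra.
    nra. }
  rewrite <- (sqrt_Rsqr (p + q)) by lra; apply sqrt_le_1_alt; unfold Rsqr; nra.
Qed.

Lemma Cnorm_reverse_triangle a b : Cnorm b - Cnorm a <= Cnorm (Cadd a b).
Proof.
  pose proof (Cnorm_triangle (Cadd a b) (Copp a)) as H.
  replace (Cadd (Cadd a b) (Copp a)) with b in H by ring.
  replace (Cnorm (Copp a)) with (Cnorm a) in H
    by (unfold Cnorm, Copp, Re, Im; simpl; f_equal; ring).
  lra.
Qed.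

Lemma RInt_lin_comb (f g : R -> R) a b c d :
  ex_RInt f a b -> ex_RInt g a b ->
  RInt (fun x => c * f x + d * g x) a b = c * RInt f a b + d * RInt g a b.
Proof.
  intros Hf Hg; apply is_RInt_unique.
  exact (is_RInt_plus (V := R_NormedModule) _ _ a b _ _
           (is_RInt_scal (V := R_NormedModule) f a b c _ (RInt_correct f a b Hf))
           (is_RInt_scal (V := R_NormedModule) g a b d _ (RInt_correct g a b Hg))).
Qed.

Lemma RInt_const_on (f : R -> R) a b c : a <= b ->
  (forall x, a < x < b -> f x = c) -> RInt f a b = (b - a) * c.
Proof.
  intros Hab Hf.
  rewrite (RInt_ext (V := R_CompleteNormedModule) f (fun _ => c)).
  - rewrite RInt_const; reflexivity.
  - intros x Hx; rewrite Rmin_left, Rmax_right in Hx by lra; auto.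
Qed.

Definition Mat := nat -> nat -> Cx.

Definition mmul (A B : Mat) : Mat := fun i j =>
  Cadd (Cmul (A i 0%nat) (B 0%nat j)) (Cmul (A i 1%nat) (B 1%nat j)).

Definition transfer (z : Cx) (s th : R) : Mat := fun i j =>
  Csub (delta i j) (Cmul (Cmul z (RtoC s)) (RtoC (JHmat th i j))).

Lemma JHmat_sq th p q : (p < 2)%nat -> (q < 2)%nat ->
  JHmat th p 0 * JHmat th 0 q + JHmat th p 1 * JHmat th 1 q = 0.
Proof.
  intros Hp Hq; destruct p as [|[|]]; try lia; destruct q as [|[|]]; try lia;
    unfold JHmat, Jmat, Hmat; ring.
Qed.

Lemma in_dom_between L y t x : in_dom L y -> in_dom L x -> y <= t <= x -> in_dom L t.
Proof. unfold in_dom; destruct L; intros [H1 H2] [H3 H4] H5; split; auto; lra. Qed.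

Section Integral_equation.
Variables (N : nat) (ell th : nat -> R) (L : option R) (z : Cx)
  (U : R -> nat -> nat -> Cx).
Hypothesis HIE : solves_IE N ell th L z U.

Definition integrand_re (i j : nat) (t : R) : R :=
  JHam N ell th t i 0 * Re (U t 0%nat j) + JHam N ell th t i 1 * Re (U t 1%nat j).
Definition integrand_im (i j : nat) (t : R) : R :=
  JHam N ell th t i 0 * Im (U t 0%nat j) + JHam N ell th t i 1 * Im (U t 1%nat j).

Lemma solves_IE_RInt x i j : in_dom L x -> (i < 2)%nat -> (j < 2)%nat ->
  ex_RInt (integrand_re i j) 0 x /\ ex_RInt (integrand_im i j) 0 x /\
  U x i j = Csub (delta i j)
              (Cmul z (RInt (integrand_re i j) 0 x, RInt (integrand_im i j) 0 x)).
Proof.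
  intros Hx Hi Hj; destruct (HIE x Hx i j Hi Hj) as [pre [pim E]].
  split; [|split]; try (apply ex_RInt_Reals_1; assumption).
  rewrite E, (RInt_Reals (integrand_re i j) _ _ pre),
    (RInt_Reals (integrand_im i j) _ _ pim); reflexivity.
Qed.

Lemma U_increment y x i j : in_dom L y -> in_dom L x -> y <= x ->
  (i < 2)%nat -> (j < 2)%nat ->
  ex_RInt (integrand_re i j) y x /\ ex_RInt (integrand_im i j) y x /\
  Csub (U x i j) (U y i j) =
    Copp (Cmul z (RInt (integrand_re i j) y x, RInt (integrand_im i j) y x)).
Proof.
  intros Hy Hx Hyx Hi Hj.
  destruct (solves_IE_RInt x i j Hx Hi Hj) as [Rx [Ix Ex]].
  destruct (solves_IE_RInt y i j Hy Hi Hj) as [Ry [Iy Ey]].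
  assert (Hy0 : 0 <= y <= x) by (destruct Hy; lra).
  assert (R1 : ex_RInt (integrand_re i j) y x)
    by exact (ex_RInt_Chasles_2 (V := R_CompleteNormedModule) _ 0 y x Hy0 Rx).
  assert (I1 : ex_RInt (integrand_im i j) y x)
    by exact (ex_RInt_Chasles_2 (V := R_CompleteNormedModule) _ 0 y x Hy0 Ix).
  split; [|split]; auto.
  rewrite Ex, Ey.
  rewrite <- (RInt_Chasles (V := R_CompleteNormedModule) (integrand_re i j) 0 y x Ry R1).
  rewrite <- (RInt_Chasles (V := R_CompleteNormedModule) (integrand_im i j) 0 y x Iy I1).
  set (a := RInt (integrand_re i j) 0 y); set (b := RInt (integrand_im i j) 0 y).
  set (c := RInt (integrand_re i j) y x); set (d := RInt (integrand_im i j) y x).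
  change (plus a c, plus b d) with (Cadd (a, b) (c, d)).
  unfold Csub; ring.
Qed.

Definition left_mul (M : nat -> nat -> R) (p j : nat) (t : R) : Cx :=
  Cadd (Cmul (RtoC (M p 0%nat)) (U t 0%nat j)) (Cmul (RtoC (M p 1%nat)) (U t 1%nat j)).

Lemma integrands_JHmat y x th0 i j :
  (forall u, y < u < x -> th (idx N ell u) = th0) ->
  forall u, y < u < x ->
  integrand_re i j u = Re (left_mul (JHmat th0) i j u) /\
  integrand_im i j u = Im (left_mul (JHmat th0) i j u).
Proof.
  intros Hc u Hu; unfold integrand_re, integrand_im, JHam, left_mul.
  rewrite (Hc u Hu); unfold Cmul, Cadd, RtoC, Re, Im; simpl; split; ring.
Qed.

(* On a constancy interval of H, J H U' = - z (J H)^2 U = 0. *)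
Lemma JHU_constant y t th0 : in_dom L y -> in_dom L t -> y <= t ->
  (forall u, y < u < t -> th (idx N ell u) = th0) ->
  forall p j, (p < 2)%nat -> (j < 2)%nat ->
  left_mul (JHmat th0) p j t = left_mul (JHmat th0) p j y.
Proof.
  intros Hy Ht Hyt Hc p j Hp Hj.
  set (M := JHmat th0).
  destruct (U_increment y t 0 j Hy Ht Hyt ltac:(lia) Hj) as [R0 [I0 E0]].
  destruct (U_increment y t 1 j Hy Ht Hyt ltac:(lia) Hj) as [R1 [I1 E1]].
  assert (Hsq : forall q, (q < 2)%nat -> M p 0%nat * M 0%nat q + M p 1%nat * M 1%nat q = 0)
    by (intros; apply JHmat_sq; auto).
  assert (Hzero : forall (f : nat -> R -> R) (w : R -> nat -> R),
      ex_RInt (f 0%nat) y t -> ex_RInt (f 1%nat) y t ->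
      (forall q u, (q < 2)%nat -> y < u < t ->
         f q u = M q 0%nat * w u 0%nat + M q 1%nat * w u 1%nat) ->
      M p 0%nat * RInt (f 0%nat) y t + M p 1%nat * RInt (f 1%nat) y t = 0).
  { intros f w F0 F1 Hf.
    rewrite <- RInt_lin_comb by auto.
    rewrite (RInt_const_on _ y t 0 Hyt); [ring|].
    intros u Hu; rewrite !Hf by (auto; lia).
    transitivity ((M p 0%nat * M 0%nat 0%nat + M p 1%nat * M 1%nat 0%nat) * w u 0%nat +
                  (M p 0%nat * M 0%nat 1%nat + M p 1%nat * M 1%nat 1%nat) * w u 1%nat);
      [ring | rewrite !Hsq by lia; ring]. }
  assert (Hre : M p 0%nat * RInt (integrand_re 0 j) y t
              + M p 1%nat * RInt (integrand_re 1 j) y t = 0).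
  { apply (Hzero (fun q => integrand_re q j) (fun u q => Re (U u q j))); auto.
    intros q u Hq Hu; unfold integrand_re, JHam; rewrite (Hc u Hu); reflexivity. }
  assert (Him : M p 0%nat * RInt (integrand_im 0 j) y t
              + M p 1%nat * RInt (integrand_im 1 j) y t = 0).
  { apply (Hzero (fun q => integrand_im q j) (fun u q => Im (U u q j))); auto.
    intros q u Hq Hu; unfold integrand_im, JHam; rewrite (Hc u Hu); reflexivity. }
  replace (left_mul M p j t) with
    (Cadd (left_mul M p j y)
       (Cadd (Cmul (RtoC (M p 0%nat)) (Csub (U t 0%nat j) (U y 0%nat j)))
             (Cmul (RtoC (M p 1%nat)) (Csub (U t 1%nat j) (U y 1%nat j)))))
    by (unfold left_mul, Csub; ring).
  assert (Hlin : forall a b r s r' s' w,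
      Cadd (Cmul (RtoC a) (Copp (Cmul w (r, s)))) (Cmul (RtoC b) (Copp (Cmul w (r', s'))))
      = Copp (Cmul w (a * r + b * r', a * s + b * s')))
    by (intros; Cx_ext_unfold; ring).
  rewrite E0, E1, Hlin, Hre, Him; Cx_ext_unfold; ring.
Qed.

Lemma U_on_constancy_interval y x th0 : in_dom L y -> in_dom L x -> y <= x ->
  (forall u, y < u < x -> th (idx N ell u) = th0) ->
  forall i j, (i < 2)%nat -> (j < 2)%nat ->
  U x i j = mmul (transfer z (x - y) th0) (U y) i j.
Proof.
  intros Hy Hx Hyx Hc i j Hi Hj.
  destruct (U_increment y x i j Hy Hx Hyx Hi Hj) as [R0 [I0 E0]].
  set (M := JHmat th0).
  assert (F : forall u, y < u < x ->
            integrand_re i j u = Re (left_mul M i j y) /\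
            integrand_im i j u = Im (left_mul M i j y)).
  { intros u Hu.
    assert (Hu' : in_dom L u) by (apply in_dom_between with y x; auto; lra).
    rewrite <- (JHU_constant y u th0 Hy Hu' ltac:(lra)) by (auto; intros; apply Hc; lra).
    apply (integrands_JHmat y x); auto. }
  rewrite (RInt_const_on _ y x (Re (left_mul M i j y)) Hyx) in E0 by (apply F).
  rewrite (RInt_const_on _ y x (Im (left_mul M i j y)) Hyx) in E0 by (apply F).
  replace (U x i j) with (Cadd (Csub (U x i j) (U y i j)) (U y i j)) by (unfold Csub; ring).
  rewrite E0; unfold mmul, transfer, left_mul; fold M.
  destruct i as [|[|]]; try lia; unfold delta; simpl Nat.eqb; cbv iota;
    set (w0 := U y 0%nat j); set (w1 := U y 1%nat j); clearbody w0 w1; Cx_ext_unfold; ring.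
Qed.

End Integral_equation.

Section Nodes.
Variables (N : nat) (ell th : nat -> R) (L : option R) (z : Cx)
  (U : R -> nat -> nat -> Cx).
Hypothesis HIE : solves_IE N ell th L z U.
Hypothesis Hell : forall k, (k < N)%nat -> 0 < ell k.
Hypothesis HL : match L with Some L0 => X ell N < L0 | None => True end.

Lemma X_le a b : (a <= b <= N)%nat -> X ell a <= X ell b.
Proof.
  intros [H1 H2]; induction b.
  - replace a with 0%nat by lia; lra.
  - destruct (Nat.eq_dec a (S b)) as [-> | Ha]; [lra|].
    simpl; pose proof (Hell b ltac:(lia)); specialize (IHb ltac:(lia) ltac:(lia)); lra.
Qed.

Lemma idx_eq k t : (k <= N)%nat -> X ell k <= t ->
  ((k < N)%nat -> t < X ell (S k)) -> idx N ell t = k.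
Proof.
  intros Hk H1 H2; unfold idx.
  enough (E : forall n, (n <= N)%nat -> idx_aux ell t n = Nat.min n k)
    by (rewrite E by lia; lia).
  induction n as [|n IH]; intros Hn; [simpl; lia|].
  change (idx_aux ell t (S n))
    with (idx_aux ell t n + (if Rle_dec (X ell (S n)) t then 1 else 0))%nat.
  rewrite IH by lia.
  destruct (Rle_dec (X ell (S n)) t) as [Hle | Hgt].
  - destruct (Nat.le_gt_cases (S n) k); [lia|].
    pose proof (X_le (S k) (S n) ltac:(lia)); specialize (H2 ltac:(lia)); lra.
  - destruct (Nat.le_gt_cases (S n) k); [|lia].
    pose proof (X_le (S n) k ltac:(lia)); lra.
Qed.

Lemma in_dom_X k : (k <= N)%nat -> in_dom L (X ell k).
Proof.
  intros Hk; pose proof (X_le 0 k ltac:(lia)); pose proof (X_le k N ltac:(lia)).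
  simpl in *; unfold in_dom; destruct L; split; auto; lra.
Qed.

Fixpoint transfer_prod (k : nat) : Mat :=
  match k with
  | 0%nat => delta
  | S k' => mmul (transfer z (ell k') (th k')) (transfer_prod k')
  end.

Lemma U_at_node k : (k <= N)%nat -> forall i j, (i < 2)%nat -> (j < 2)%nat ->
  U (X ell k) i j = transfer_prod k i j.
Proof.
  induction k as [|k IH]; intros Hk i j Hi Hj.
  - destruct (solves_IE_RInt N ell th L z U HIE 0 i j (in_dom_X 0 ltac:(lia)) Hi Hj)
      as [_ [_ E]].
    simpl X; rewrite E, !(RInt_point (V := R_CompleteNormedModule)).
    change (@zero (CompleteNormedModule.AbelianMonoid R_AbsRing R_CompleteNormedModule))
      with 0.
    change (0, 0) with Czero; simpl transfer_prod; unfold Csub; ring.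
  - rewrite (U_on_constancy_interval N ell th L z U HIE (X ell k) (X ell (S k)) (th k)
               (in_dom_X k ltac:(lia)) (in_dom_X (S k) Hk) (X_le k (S k) ltac:(lia)))
      by (auto; intros u Hu; f_equal; apply idx_eq; try lia; lra).
    simpl X; replace (X ell k + ell k - X ell k) with (ell k) by ring.
    simpl transfer_prod; unfold mmul; rewrite !IH by lia; reflexivity.
Qed.

Lemma U_last_interval x : in_dom L x -> X ell N <= x ->
  forall i j, (i < 2)%nat -> (j < 2)%nat ->
  U x i j = mmul (transfer z (x - X ell N) (th N)) (transfer_prod N) i j.
Proof.
  intros Hx HxN i j Hi Hj.
  rewrite (U_on_constancy_interval N ell th L z U HIE (X ell N) x (th N)
             (in_dom_X N ltac:(lia)) Hx HxN)
    by (auto; intros u Hu; f_equal; apply idx_eq; try lia; lra).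
  unfold mmul; rewrite !U_at_node by lia; reflexivity.
Qed.

End Nodes.

Definition row_mul (w : Cx * Cx) (T : Mat) : Cx * Cx :=
  (Cadd (Cmul (fst w) (T 0%nat 0%nat)) (Cmul (snd w) (T 1%nat 0%nat)),
   Cadd (Cmul (fst w) (T 0%nat 1%nat)) (Cmul (snd w) (T 1%nat 1%nat))).

Lemma row_mul_mmul w A B : row_mul w (mmul A B) = row_mul (row_mul w A) B.
Proof. destruct w; unfold row_mul, mmul; simpl; f_equal; ring. Qed.

Lemma row_mul_delta w : row_mul w delta = w.
Proof. destruct w; unfold row_mul, delta; simpl; f_equal; Cx_ext_all; ring. Qed.

Definition affine (s v : Cx) (t : R) : Cx := Cadd s (Cmul (RtoC t) v).

Lemma row_mul_affine s0 s1 v0 v1 t T :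
  row_mul (affine s0 v0 t, affine s1 v1 t) T =
  (affine (fst (row_mul (s0, s1) T)) (fst (row_mul (v0, v1) T)) t,
   affine (snd (row_mul (s0, s1) T)) (snd (row_mul (v0, v1) T)) t).
Proof. unfold row_mul, affine; simpl; f_equal; ring. Qed.

Lemma JHmat_entries th :
  JHmat th 0 0 = cos th * sin th /\ JHmat th 0 1 = sin th ^ 2 /\
  JHmat th 1 0 = - (cos th ^ 2) /\ JHmat th 1 1 = - (cos th * sin th).
Proof. unfold JHmat, Jmat, Hmat; repeat split; ring. Qed.

Lemma row_mul_transfer A B z l th :
  row_mul (A, B) (transfer z l th) =
  (Cadd (Cmul A (Csub Cone (Cmul (Cmul (Cmul z (RtoC l)) (RtoC (cos th))) (RtoC (sin th)))))
        (Cmul B (Cmul (Cmul (Cmul z (RtoC l)) (RtoC (cos th))) (RtoC (cos th)))),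
   Cadd (Cmul A (Copp (Cmul (Cmul (Cmul z (RtoC l)) (RtoC (sin th))) (RtoC (sin th)))))
        (Cmul B (Cadd Cone (Cmul (Cmul (Cmul z (RtoC l)) (RtoC (cos th))) (RtoC (sin th)))))).
Proof.
  destruct (JHmat_entries th) as [E1 [E2 [E3 E4]]].
  unfold row_mul, transfer, delta; simpl; rewrite E1, E2, E3, E4; f_equal; Cx_ext_all; ring.
Qed.

Definition row0_slope (z : Cx) (th : R) : Cx * Cx :=
  (Copp (Cmul z (RtoC (cos th * sin th))), Copp (Cmul z (RtoC (sin th ^ 2)))).

Definition row0_transfer (z : Cx) (s th : R) : Cx * Cx :=
  (affine Cone (fst (row0_slope z th)) s, affine Czero (snd (row0_slope z th)) s).

Lemma row0_transfer_mmul z s th V j : (j < 2)%nat ->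
  mmul (transfer z s th) V 0%nat j =
  (if Nat.eqb j 0 then fst else snd) (row_mul (row0_transfer z s th) V).
Proof.
  intros Hj; destruct (JHmat_entries th) as [E1 [E2 _]].
  unfold mmul, transfer, row_mul, row0_transfer, row0_slope, affine, delta;
    simpl Nat.eqb; cbv iota; rewrite E1, E2.
  destruct j as [|[|j]]; [simpl; ring | simpl; ring | lia].
Qed.

Lemma pow2_gt0 x : x <> 0 -> 0 < x ^ 2.
Proof. intros H; pose proof (Rsqr_pos_lt x H); unfold Rsqr in *; nra. Qed.

Lemma sin_neq0_notpiZ t : ~ in_piZ t -> sin t <> 0.
Proof. intros H E; apply H, sin_eq_0_0, E. Qed.

Lemma sin_cos_piZ t : in_piZ t -> sin t = 0 /\ (cos t = 1 \/ cos t = -1).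
Proof.
  intros H; assert (Hs : sin t = 0) by (apply sin_eq_0_1; exact H).
  split; auto; pose proof (sin2_cos2 t) as E; unfold Rsqr in E; rewrite Hs in E; nra.
Qed.

Lemma row_mul_transfer_piZ A B z l th : in_piZ th ->
  row_mul (A, B) (transfer z l th) = (Cadd A (Cmul (Cmul z (RtoC l)) B), B).
Proof.
  intros Hth; destruct (sin_cos_piZ th Hth) as [Hs [Hc | Hc]];
    rewrite row_mul_transfer, Hs, Hc; f_equal; Cx_ext_all; ring.
Qed.

Lemma cot_sub_neq0 t1 t2 : t1 < t2 < t1 + PI -> sin t1 <> 0 -> sin t2 <> 0 ->
  cot t2 - cot t1 <> 0.
Proof.
  intros [H1 H2] S1 S2 E; unfold cot in E.
  assert (0 < sin (t2 - t1)) by (apply sin_gt_0; lra).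
  rewrite sin_minus in H.
  assert (cos t2 * sin t1 - cos t1 * sin t2 = (cos t2 / sin t2 - cos t1 / sin t1) * (sin t1 * sin t2))
    by (field; auto).
  rewrite E in H0; lra.
Qed.

Lemma row_mul_transfer_ratio (z D B : Cx) (l th : R) : sin th <> 0 ->
  let E := Csub D (RtoC (cot th)) in
  let F := Cadd (Cmul (RtoC (- (l * sin th ^ 2))) z) (Cinv E) in
  E <> Czero -> F <> Czero ->
  snd (row_mul (Cmul D B, B) (transfer z l th)) = Cmul (Cmul B E) F /\
  fst (row_mul (Cmul D B, B) (transfer z l th)) =
    Cmul (Cadd (RtoC (cot th)) (Cinv F)) (snd (row_mul (Cmul D B, B) (transfer z l th))).
Proof.
  intros Hs E F HE HF; rewrite row_mul_transfer; simpl fst; simpl snd.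
  assert (Hc : cos th = cot th * sin th) by (unfold cot; field; auto).
  rewrite Hc; unfold F, E in *; clear E F.
  replace (l * sin th ^ 2) with (l * sin th * sin th) in * by ring.
  rewrite !RtoC_mul, RtoC_opp, !RtoC_mul in *; simpl in *.
  set (k := RtoC (cot th)) in *; set (s := RtoC (sin th)) in *; set (ll := RtoC l) in *.
  clearbody k s ll.
  split.
  - field; auto.
  - field; split; auto.
    intro H0; apply (Cmul_neq0 _ _ HF HE); rewrite <- H0.
    change (R1, R0) with Cone; field; auto.
Qed.

Definition same_half_plane (z g : Cx) : Prop := g = Czero \/ 0 < Im g * Im z.

Lemma Im_Cinv_mul_nonpos (a : Cx) (y : R) : a <> Czero ->
  0 <= Im a * y -> Im (Cinv a) * y <= 0.
Proof.
  intros Ha H; rewrite Im_Cinv_mul by auto.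
  pose proof (Rinv_0_lt_compat _ (Cnorm2_gt0 a Ha)); nra.
Qed.

Lemma Im_Cinv_mul_pos (a : Cx) (y : R) : a <> Czero ->
  Im a * y < 0 -> 0 < Im (Cinv a) * y.
Proof.
  intros Ha H; rewrite Im_Cinv_mul by auto.
  pose proof (Rinv_0_lt_compat _ (Cnorm2_gt0 a Ha)); nra.
Qed.

(* Im E has the sign of Im z (weakly), so Im F = - l Im z + Im (1/E) has the
   opposite one; omega <> 0 rules out E = 0 when nothing else is left. *)
Lemma cf_step_same_half_plane (z G : Cx) (om ups l : R) :
  Im z <> 0 -> same_half_plane z G -> 0 <= ups ->
  (ups = 0 -> G = Czero -> om <> 0) -> 0 < l ->
  let E := Cadd (Cadd (RtoC om) (Cmul (RtoC ups) z)) G in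
  let F := Cadd (Cmul (RtoC (- l)) z) (Cinv E) in
  E <> Czero /\ F <> Czero /\ 0 < Im (Cinv F) * Im z.
Proof.
  intros Hz HG Hu Hom Hl E F.
  assert (ImE : Im E = ups * Im z + Im G)
    by (unfold E, Cadd, Cmul, RtoC, Im, Re; simpl; ring).
  assert (Hiz : 0 < Im z * Im z) by (apply Rsqr_pos_lt in Hz; unfold Rsqr in Hz; lra).
  assert (HE : E <> Czero /\ 0 <= Im E * Im z).
  { destruct HG as [HG | HG].
    - destruct (Req_dec ups 0) as [Hu0 | Hu0].
      + split.
        * intro EE; apply (Hom Hu0 HG).
          assert (H : Re E = 0) by (rewrite EE; reflexivity).
          unfold E in H; rewrite HG, Hu0 in H;
            unfold Re, Cadd, Cmul, RtoC in H; simpl in H; lra.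
        * rewrite ImE, HG, Hu0; unfold Im, RtoC; simpl; lra.
      + assert (0 < Im E * Im z) by (rewrite ImE, HG; unfold Im at 2, RtoC; simpl; nra).
        split; [apply Cneq0_Im; intro; nra | lra].
    - assert (0 < Im E * Im z) by (rewrite ImE; nra).
      split; [apply Cneq0_Im; intro; nra | lra]. }
  destruct HE as [HE HEz].
  assert (ImF : Im F * Im z < 0).
  { pose proof (Im_Cinv_mul_nonpos E (Im z) HE HEz).
    unfold F; change (Im (Cadd ?a ?b)) with (Im a + Im b); rewrite Im_RtoC_mul; nra. }
  assert (HF : F <> Czero) by (apply Cneq0_Im; intro; nra).
  repeat split; auto.
  apply Im_Cinv_mul_pos; auto.
Qed.

Lemma notpiZb_cases t :
  (notpiZb t = 1%nat /\ ~ in_piZ t) \/ (notpiZb t = 0%nat /\ in_piZ t).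
Proof.
  unfold notpiZb; destruct (excluded_middle_informative (in_piZ t)); auto.
Qed.

Lemma PI2_notpiZ : ~ in_piZ (PI / 2).
Proof.
  intros [n Hn]; pose proof PI_RGT_0.
  assert (H2 : IZR (2 * n) = 1).
  { rewrite mult_IZR; apply Rmult_eq_reg_r with PI; [|lra].
    rewrite Rmult_assoc, <- Hn; field. }
  apply eq_IZR in H2; lia.
Qed.

Lemma piZ_no_two_close t1 t2 : t1 < t2 < t1 + PI -> in_piZ t1 -> ~ in_piZ t2.
Proof.
  intros [H1 H2] [a Ha] [b Hb]; rewrite Ha, Hb in *; pose proof PI_RGT_0.
  assert (Hab : IZR a < IZR b) by (apply Rmult_lt_reg_r with PI; auto).
  assert (Hba : IZR b < IZR (a + 1)) by (rewrite plus_IZR; apply Rmult_lt_reg_r with PI; lra).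
  apply lt_IZR in Hab; apply lt_IZR in Hba; lia.
Qed.

Section Indices.
Variables (N : nat) (th : nat -> R).
Hypothesis Hth0 : th 0%nat = PI / 2.
Hypothesis Hth : forall k, (k < N)%nat -> th k < th (S k) < th k + PI.
Hypothesis HthN : ~ in_piZ (th N).

Notation nonpi k := (notpiZb (th k)).
Notation count n := (cnt_from th 0 n).

Lemma count_succ n : count (S n) = (count n + nonpi n)%nat.
Proof. reflexivity. Qed.

Lemma count_le a b : (a <= b)%nat -> (count a <= count b)%nat.
Proof. induction 1; [lia | rewrite count_succ; lia]. Qed.

Lemma count_shift n : count (S n) = (nonpi 0 + cnt_from th 1 n)%nat.
Proof.
  induction n as [|n IH]; [simpl; lia|].
  rewrite count_succ, IH; simpl; lia.
Qed.

Lemma nonpi_0 : nonpi 0 = 1%nat.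
Proof.
  destruct (notpiZb_cases (th 0)) as [[H _] | [_ H]]; auto.
  rewrite Hth0 in H; destruct (PI2_notpiZ H).
Qed.

Lemma nonpi_N : nonpi N = 1%nat.
Proof. destruct (notpiZb_cases (th N)) as [[H _] | [_ H]]; tauto. Qed.

Lemma kappa_eq_count : kappa N th = count N.
Proof.
  unfold kappa; pose proof (count_shift N) as E.
  rewrite nonpi_0, count_succ, nonpi_N in E; lia.
Qed.

Lemma kj_aux_spec j n : (j <= count n)%nat ->
  count (kj_aux th j n) = j /\ (kj_aux th j n <= n)%nat /\
  forall m, (kj_aux th j n < m <= n)%nat -> count m <> j.
Proof.
  induction n as [|n IH]; intros Hj.
  - simpl in *; repeat split; intros; lia.
  - change (kj_aux th j (S n))
      with (if Nat.eqb (count (S n)) j then S n else kj_aux th j n).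
    destruct (Nat.eqb_spec (count (S n)) j) as [E | E].
    + repeat split; auto; intros; lia.
    + rewrite count_succ in Hj, E.
      destruct (IH ltac:(destruct (notpiZb_cases (th n)) as [[H _] | [H _]]; lia))
        as [A [B C]].
      repeat split; auto; intros m Hm.
      destruct (Nat.eq_dec m (S n)) as [-> | Hne]; [rewrite count_succ; lia | apply C; lia].
Qed.

Lemma kj_spec j : (j <= kappa N th)%nat ->
  count (kj N th j) = j /\ (kj N th j <= N)%nat /\
  forall m, (kj N th j < m <= N)%nat -> count m <> j.
Proof. intros; apply kj_aux_spec; rewrite <- kappa_eq_count; auto. Qed.

Lemma kj_notpiZ j : (j <= kappa N th)%nat -> ~ in_piZ (th (kj N th j)).
Proof.
  intros Hj; destruct (kj_spec j Hj) as [A [B C]].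
  destruct (Nat.eq_dec (kj N th j) N) as [-> | E]; auto.
  destruct (notpiZb_cases (th (kj N th j))) as [[_ H] | [H _]]; auto.
  exfalso; apply (C (S (kj N th j))); [lia | rewrite count_succ, H; lia].
Qed.

Lemma kj_kappa : kj N th (kappa N th) = N.
Proof.
  destruct (kj_spec (kappa N th) ltac:(lia)) as [A [B C]].
  destruct (Nat.eq_dec (kj N th (kappa N th)) N); auto.
  exfalso; apply (C N); [lia | symmetry; apply kappa_eq_count].
Qed.

Lemma kj_0 : kj N th 0 = 0%nat.
Proof.
  destruct (kj_spec 0 ltac:(lia)) as [A _].
  destruct (kj N th 0) as [|n] eqn:E; auto.
  pose proof (count_le 1 (S n) ltac:(lia)) as H.
  change (count 1) with (0 + nonpi 0)%nat in H; rewrite nonpi_0 in H; lia.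
Qed.

Lemma kj_succ j : (j < kappa N th)%nat ->
  (kj N th j < N)%nat /\
  (kj N th (S j) = S (kj N th j) \/
   (kj N th (S j) = S (S (kj N th j)) /\ in_piZ (th (S (kj N th j))))).
Proof.
  intros Hj; destruct (kj_spec j ltac:(lia)) as [A [B C]].
  destruct (kj_spec (S j) ltac:(lia)) as [A' [B' C']].
  set (k := kj N th j) in *; set (k' := kj N th (S j)) in *.
  assert (Hk : (k < N)%nat).
  { destruct (Nat.eq_dec k N) as [E | E]; [|lia].
    rewrite E, <- kappa_eq_count in A; lia. }
  split; auto.
  assert (Hb : nonpi k = 1%nat).
  { destruct (notpiZb_cases (th k)) as [[H _] | [H _]]; auto.
    exfalso; apply (C (S k)); [lia | rewrite count_succ, H; lia]. }
  assert (Hc1 : count (S k) = S j) by (rewrite count_succ, Hb; lia).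
  assert (H1 : (S k <= k')%nat).
  { destruct (Nat.le_gt_cases (S k) k'); auto.
    exfalso; apply (C' (S k)); [lia | auto]. }
  destruct (Nat.eq_dec k' (S k)); [left; auto | right].
  assert (H2 : nonpi (S k) = 0%nat).
  { pose proof (count_le (S (S k)) k' ltac:(lia)) as H.
    rewrite count_succ, Hc1 in H; lia. }
  assert (Hpi : in_piZ (th (S k)))
    by (destruct (notpiZb_cases (th (S k))) as [[H _] | [_ H]]; [lia | auto]).
  split; auto.
  destruct (Nat.eq_dec k' (S (S k))); auto; exfalso.
  assert (H3 : nonpi (S (S k)) = 1%nat).
  { destruct (notpiZb_cases (th (S (S k)))) as [[H _] | [_ H]]; auto.
    destruct (piZ_no_two_close (th (S k)) (th (S (S k))) (Hth (S k) ltac:(lia)) Hpi H). }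
  pose proof (count_le (S (S (S k))) k' ltac:(lia)) as H.
  rewrite !count_succ, <- count_succ, Hc1, H2, H3 in H; lia.
Qed.

End Indices.

Definition ratio_at (w : Cx * Cx) (t : R) (G : Cx) : Prop :=
  snd w <> Czero /\ fst w = Cmul (Cadd (RtoC (cot t)) G) (snd w).

Section Continued_fraction.
Variables (N : nat) (ell th : nat -> R) (L : option R) (z : Cx).
Hypothesis Hth0 : th 0%nat = PI / 2.
Hypothesis Hell : forall k, (k < N)%nat -> 0 < ell k.
Hypothesis Hth : forall k, (k < N)%nat -> th k < th (S k) < th k + PI.
Hypothesis HthN : ~ in_piZ (th N).
Hypothesis Hz : Im z <> 0.

Notation T k := (transfer z (ell k) (th k)).
Notation k_ j := (kj N th j).

Fixpoint row_tail (w : Cx * Cx) (d : nat) : Cx * Cx :=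
  match d with
  | 0%nat => w
  | S d' => row_mul (row_tail w d') (T (N - d))
  end.

Lemma row_tail_step w k : (k < N)%nat ->
  row_tail w (N - k) = row_mul (row_tail w (N - S k)) (T k).
Proof.
  intros Hk; replace (N - k)%nat with (S (N - S k)) by lia; simpl row_tail.
  replace (N - S (N - S k))%nat with k by lia; reflexivity.
Qed.

Lemma row_mul_transfer_prod w : row_mul w (transfer_prod ell th z N) = row_tail w N.
Proof.
  enough (E : forall d, (d <= N)%nat ->
             row_mul (row_tail w d) (transfer_prod ell th z (N - d))
             = row_mul w (transfer_prod ell th z N)).
  { specialize (E N (le_n N)); rewrite Nat.sub_diag in E; simpl in E.
    rewrite row_mul_delta in E; auto. }
  induction d as [|d IH]; intros Hd; [rewrite Nat.sub_0_r; reflexivity|].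
  simpl row_tail; rewrite <- row_mul_mmul, <- IH by lia.
  replace (N - d)%nat with (S (N - S d)) by lia; reflexivity.
Qed.

Definition lz (j : nat) : Cx :=
  match lj N ell th L j with Some a => Cmul (RtoC (- a)) z | None => Czero end.

Definition cf_level (j : nat) (G : Cx) : Cx :=
  Cinv (Cadd (lz j)
    (Cinv (Cadd (Cadd (RtoC (omegaj N th j)) (Cmul (RtoC (upsj N ell th j)) z)) G))).

Fixpoint cf_tail (n j : nat) (g : Cx) : Cx :=
  match n with
  | 0%nat => g
  | S n' => cf_level j (cf_tail n' (S j) g)
  end.

Lemma cfrac_cf_tail n j :
  cfrac N ell th L z n j = cf_tail n j (inv_mlz (lj N ell th L (j + n)) z).
Proof.
  revert j; induction n as [|n IH]; intros j; simpl; [now rewrite Nat.add_0_r|].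
  rewrite IH; replace (S j + n)%nat with (j + S n)%nat by lia; reflexivity.
Qed.

(* Passing back from k(j+1) to k(j) + 1, across the possible pi Z direction. *)
Lemma row_tail_skip_piZ w j A B G : (j < kappa N th)%nat ->
  row_tail w (N - k_ (S j)) = (A, B) ->
  A = Cmul (Cadd (RtoC (cot (th (k_ (S j))))) G) B ->
  row_tail w (N - S (k_ j)) =
    (Cmul (Cadd (Cadd (RtoC (cot (th (k_ (S j))))) (Cmul (RtoC (upsj N ell th j)) z)) G) B, B)
  /\ 0 <= upsj N ell th j
  /\ (upsj N ell th j = 0 -> omegaj N th j <> 0).
Proof.
  intros Hj EW HA.
  destruct (kj_succ N th Hth0 Hth HthN j Hj) as [Hk [Hc | [Hc Hpi]]].
  - assert (Hups : upsj N ell th j = 0)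
      by (unfold upsj; rewrite Hc; replace (S (k_ j) - k_ j)%nat with 1%nat by lia;
          reflexivity).
    rewrite Hups, <- Hc, EW; repeat split; [f_equal; rewrite HA; ring | lra |].
    intros _; unfold omegaj; rewrite Hc.
    apply cot_sub_neq0; [apply Hth; auto | |];
      apply sin_neq0_notpiZ; [| rewrite <- Hc]; apply (kj_notpiZ N th Hth0 HthN); lia.
  - assert (Hups : upsj N ell th j = ell (S (k_ j)))
      by (unfold upsj; rewrite Hc; replace (S (S (k_ j)) - k_ j)%nat with 2%nat by lia;
          reflexivity).
    assert (HkN : (S (k_ j) < N)%nat)
      by (destruct (kj_spec N th Hth0 HthN (S j) ltac:(lia)) as [_ [B' _]]; lia).
    rewrite Hups; repeat split; [| apply Rlt_le, Hell; auto | intros; pose proof (Hell _ HkN); lra].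
    rewrite row_tail_step by auto; rewrite <- Hc, EW, row_mul_transfer_piZ by auto.
    f_equal; rewrite HA; ring.
Qed.

Lemma row_tail_ratio_step w j G : (j < kappa N th)%nat ->
  ratio_at (row_tail w (N - k_ (S j))) (th (k_ (S j))) G -> same_half_plane z G ->
  ratio_at (row_tail w (N - k_ j)) (th (k_ j)) (cf_level j G) /\
  same_half_plane z (cf_level j G).
Proof.
  intros Hj [HB HA] HG.
  destruct (row_tail w (N - k_ (S j))) as [A B] eqn:EW; simpl in HA, HB.
  destruct (row_tail_skip_piZ w j A B G Hj EW HA) as [Hskip [Hups Hom]].
  destruct (kj_succ N th Hth0 Hth HthN j Hj) as [Hk _].
  set (k := k_ j) in *.
  assert (Hsk : sin (th k) <> 0)
    by (apply sin_neq0_notpiZ, (kj_notpiZ N th Hth0 HthN); lia).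
  assert (Hl : 0 < ell k * sin (th k) ^ 2)
    by (apply Rmult_lt_0_compat; [auto | apply pow2_gt0; auto]).
  destruct (cf_step_same_half_plane z G (omegaj N th j) (upsj N ell th j)
              (ell k * sin (th k) ^ 2) Hz HG Hups (fun h _ => Hom h) Hl) as [HE [HF HGs]].
  set (D := Cadd (Cadd (RtoC (cot (th (k_ (S j))))) (Cmul (RtoC (upsj N ell th j)) z)) G)
    in *.
  assert (Eeq : Cadd (Cadd (RtoC (omegaj N th j)) (Cmul (RtoC (upsj N ell th j)) z)) G =
                Csub D (RtoC (cot (th k))))
    by (unfold omegaj, D, Csub; fold k; rewrite RtoC_sub; unfold Csub; ring).
  pose proof (row_mul_transfer_ratio z D B (ell k) (th k) Hsk) as Hratio; cbv zeta in Hratio.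
  rewrite <- Eeq in Hratio; destruct (Hratio HE HF) as [Hsnd Hfst].
  assert (Hlz : lz j = Cmul (RtoC (- (ell k * sin (th k) ^ 2))) z)
    by (unfold lz, lj, ellx; fold k; destruct (Nat.ltb_spec k N); [reflexivity | lia]).
  unfold ratio_at; rewrite row_tail_step, Hskip by auto.
  unfold cf_level; rewrite Hlz.
  repeat split; [| exact Hfst | right; exact HGs].
  rewrite Hsnd; repeat apply Cmul_neq0; auto.
Qed.

Lemma row_tail_ratio w g : ratio_at w (th N) g -> same_half_plane z g ->
  forall n, (n <= kappa N th)%nat ->
  ratio_at (row_tail w (N - k_ (kappa N th - n))) (th (k_ (kappa N th - n)))
    (cf_tail n (kappa N th - n) g) /\
  same_half_plane z (cf_tail n (kappa N th - n) g).
Proof.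
  intros Hw Hg n; induction n as [|n IH]; intros Hn.
  - rewrite Nat.sub_0_r, (kj_kappa N th Hth0 HthN), Nat.sub_diag; auto.
  - destruct (IH ltac:(lia)) as [Hr Hs].
    replace (kappa N th - n)%nat with (S (kappa N th - S n)) in Hr, Hs by lia.
    exact (row_tail_ratio_step w (kappa N th - S n) _ ltac:(lia) Hr Hs).
Qed.

Lemma row_mul_transfer_prod_ratio w g : ratio_at w (th N) g -> same_half_plane z g ->
  snd (row_mul w (transfer_prod ell th z N)) <> Czero /\
  Cdiv (fst (row_mul w (transfer_prod ell th z N)))
       (snd (row_mul w (transfer_prod ell th z N))) = cf_tail (kappa N th) 0 g.
Proof.
  intros Hw Hg.
  destruct (row_tail_ratio w g Hw Hg (kappa N th) (le_n _)) as [[HB HA] _].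
  rewrite Nat.sub_diag, (kj_0 N th Hth0 HthN), Nat.sub_0_r, Hth0 in *.
  rewrite row_mul_transfer_prod; split; auto.
  replace (cot (PI / 2)) with 0 in HA by (unfold cot; rewrite cos_PI2, sin_PI2; field).
  rewrite HA; field; auto.
Qed.

End Continued_fraction.

Lemma Cnorm_affine_ge a b s0 s :
  Cnorm (affine a b s0) - Rabs (s - s0) * Cnorm b <= Cnorm (affine a b s).
Proof.
  pose proof (Cnorm_reverse_triangle (Cmul (RtoC (s - s0)) b) (affine a b s0)) as H.
  rewrite Cnorm_mul, Cnorm_RtoC in H.
  replace (Cadd (Cmul (RtoC (s - s0)) b) (affine a b s0)) with (affine a b s) in H
    by (unfold affine; rewrite RtoC_sub; unfold Csub; ring).
  lra.
Qed.

Lemma Cnorm_affine_ratio_sub a0 b0 a1 b1 s0 s :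
  affine a1 b1 s0 <> Czero -> affine a1 b1 s <> Czero ->
  Cnorm (Csub (Cdiv (affine a0 b0 s) (affine a1 b1 s))
              (Cdiv (affine a0 b0 s0) (affine a1 b1 s0)))
  = Rabs (s - s0) * Cnorm (Csub (Cmul b0 a1) (Cmul a0 b1))
    / (Cnorm (affine a1 b1 s) * Cnorm (affine a1 b1 s0)).
Proof.
  intros H0 H.
  replace (Csub (Cdiv (affine a0 b0 s) (affine a1 b1 s))
                (Cdiv (affine a0 b0 s0) (affine a1 b1 s0)))
    with (Cmul (Cmul (RtoC (s - s0)) (Csub (Cmul b0 a1) (Cmul a0 b1)))
               (Cinv (Cmul (affine a1 b1 s) (affine a1 b1 s0))))
    by (unfold affine in *; rewrite RtoC_sub; field; auto).
  rewrite !Cnorm_mul, Cnorm_inv, Cnorm_mul, Cnorm_RtoC by (apply Cmul_neq0; auto).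
  reflexivity.
Qed.

Lemma affine_ratio_cont (a0 a1 b0 b1 : Cx) (s0 : R) : affine a1 b1 s0 <> Czero ->
  forall eps, 0 < eps -> exists del, 0 < del /\ forall s, Rabs (s - s0) < del ->
  Cnorm (Csub (Cdiv (affine a0 b0 s) (affine a1 b1 s))
              (Cdiv (affine a0 b0 s0) (affine a1 b1 s0))) < eps.
Proof.
  intros H0 eps He.
  set (d := Cnorm (affine a1 b1 s0)); set (nb := Cnorm b1).
  set (nK := Cnorm (Csub (Cmul b0 a1) (Cmul a0 b1))).
  assert (Hd : 0 < d) by (apply Cnorm_gt0; auto).
  assert (Hnb : 0 <= nb) by apply Cnorm_ge0.
  assert (HnK : 0 <= nK) by apply Cnorm_ge0.
  exists (Rmin (d / (2 * (nb + 1))) (eps * (d * d) / (2 * (nK + 1)))).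
  assert (Hed : 0 < eps * (d * d)) by (apply Rmult_lt_0_compat; nra).
  split; [apply Rmin_pos; apply Rdiv_lt_0_compat; lra|].
  intros s Hs; set (h := Rabs (s - s0)) in *.
  assert (Hh0 : 0 <= h) by apply Rabs_pos.
  assert (Hh1 : h * (nb + 1) <= d / 2).
  { apply Rle_trans with (d / (2 * (nb + 1)) * (nb + 1)); [|right; field; lra].
    apply Rmult_le_compat_r; [lra|]; apply Rlt_le, (Rlt_le_trans _ _ _ Hs), Rmin_l. }
  assert (Hh2 : h * (2 * (nK + 1)) < eps * (d * d)).
  { apply Rlt_le_trans with (eps * (d * d) / (2 * (nK + 1)) * (2 * (nK + 1)));
      [|right; field; lra].
    apply Rmult_lt_compat_r; [lra|]; apply (Rlt_le_trans _ _ _ Hs), Rmin_r. }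
  assert (Hden : d / 2 <= Cnorm (affine a1 b1 s))
    by (pose proof (Cnorm_affine_ge a1 b1 s0 s); fold d nb h in H; nra).
  assert (Hs0 : affine a1 b1 s <> Czero) by (intros E; rewrite E, Cnorm0 in Hden; lra).
  rewrite Cnorm_affine_ratio_sub by auto; fold d nK h.
  apply Rmult_lt_reg_r with (Cnorm (affine a1 b1 s) * d); [nra|].
  unfold Rdiv; rewrite Rmult_assoc, Rinv_l, Rmult_1_r by nra.
  nra.
Qed.

Lemma affine_ratio_at_infty (a0 a1 b0 b1 : Cx) : b1 <> Czero ->
  forall eps, 0 < eps -> exists M, 0 <= M /\ forall s, M <= s ->
  Cnorm (Csub (Cdiv (affine a0 b0 s) (affine a1 b1 s)) (Cdiv b0 b1)) < eps.
Proof.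
  intros Hb eps He.
  set (nb := Cnorm b1); set (na := Cnorm a1).
  set (nK := Cnorm (Csub (Cmul a0 b1) (Cmul a1 b0))).
  assert (Hnb : 0 < nb) by (apply Cnorm_gt0; auto).
  assert (Hna : 0 <= na) by apply Cnorm_ge0.
  assert (HnK : 0 <= nK) by apply Cnorm_ge0.
  set (Q := nK / (eps * nb)).
  assert (HQ : nK = Q * (eps * nb)) by (unfold Q; field; lra).
  assert (HQ0 : 0 <= Q)
    by (unfold Q; apply Rle_mult_inv_pos; [lra | apply Rmult_lt_0_compat; lra]).
  exists ((na + Q + 1) / nb); split; [apply Rle_mult_inv_pos; lra|].
  intros s Hs.
  assert (Hsn : na + Q + 1 <= s * nb).
  { apply Rmult_le_compat_r with (r := nb) in Hs; [|lra].
    replace ((na + Q + 1) / nb * nb) with (na + Q + 1) in Hs by (field; lra); lra. }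
  assert (Hden : Q + 1 <= Cnorm (affine a1 b1 s)).
  { pose proof (Cnorm_reverse_triangle a1 (Cmul (RtoC s) b1)) as H.
    rewrite Cnorm_mul, Cnorm_RtoC in H; fold na nb in H.
    pose proof (Rle_abs s); unfold affine; nra. }
  assert (Hs0 : affine a1 b1 s <> Czero) by (intros E; rewrite E, Cnorm0 in Hden; lra).
  replace (Csub (Cdiv (affine a0 b0 s) (affine a1 b1 s)) (Cdiv b0 b1))
    with (Cmul (Csub (Cmul a0 b1) (Cmul a1 b0)) (Cinv (Cmul b1 (affine a1 b1 s))))
    by (unfold affine in *; field; auto).
  rewrite Cnorm_mul, Cnorm_inv, Cnorm_mul by (apply Cmul_neq0; auto); fold nK nb.
  apply Rmult_lt_reg_r with (nb * Cnorm (affine a1 b1 s)); [nra|].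
  rewrite Rmult_assoc, Rinv_l, Rmult_1_r by nra.
  rewrite HQ; replace (eps * (nb * Cnorm (affine a1 b1 s)))
    with (Cnorm (affine a1 b1 s) * (eps * nb)) by ring.
  apply Rmult_lt_compat_r; [apply Rmult_lt_0_compat |]; lra.
Qed.

Lemma row0_slope_ratio z t : z <> Czero -> sin t <> 0 ->
  ratio_at (row0_slope z t) t Czero.
Proof.
  intros Hz Hs; unfold ratio_at, row0_slope; cbn [fst snd]; split.
  - intros E; apply (Cmul_neq0 z (RtoC (sin t ^ 2)) Hz (RtoC_neq0 _ (Rgt_not_eq _ _ (pow2_gt0 _ Hs)))).
    replace (Cmul z (RtoC (sin t ^ 2))) with (Copp (Copp (Cmul z (RtoC (sin t ^ 2))))) by ring.
    rewrite E; ring.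
  - replace (cos t) with (cot t * sin t) by (unfold cot; field; auto).
    replace (sin t ^ 2) with (sin t * sin t) by ring; rewrite !RtoC_mul; ring.
Qed.

Lemma row0_transfer_ratio z s t : z <> Czero -> 0 < s -> sin t <> 0 ->
  ratio_at (row0_transfer z s t) t (inv_mlz (Some (s * sin t ^ 2)) z).
Proof.
  intros Hz Hs Ht.
  assert (Ha : RtoC (- (s * sin t ^ 2)) <> Czero)
    by (apply RtoC_neq0; pose proof (pow2_gt0 _ Ht); nra).
  assert (Hsnd : snd (row0_transfer z s t) = Cmul (RtoC (- (s * sin t ^ 2))) z)
    by (unfold row0_transfer, row0_slope, affine; cbn [fst snd];
        rewrite RtoC_opp, RtoC_mul; ring).
  unfold ratio_at, inv_mlz; rewrite Hsnd; split; [apply Cmul_neq0; auto|].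
  unfold row0_transfer, row0_slope, affine; simpl fst.
  replace (cos t) with (cot t * sin t) by (unfold cot; field; auto).
  rewrite RtoC_opp in *; replace (sin t ^ 2) with (sin t * sin t) in * by ring.
  rewrite !RtoC_mul in *; field; split; auto.
Qed.

Lemma inv_mlz_same_half_plane l z : Im z <> 0 ->
  (forall a, l = Some a -> 0 < a) -> same_half_plane z (inv_mlz l z).
Proof.
  intros Hz Hl; destruct l as [a|]; [right | left; reflexivity].
  specialize (Hl a eq_refl).
  apply Im_Cinv_mul_pos.
  - apply Cmul_neq0; [apply RtoC_neq0; lra | apply Cneq0_Im; auto].
  - rewrite Im_RtoC_mul; pose proof (pow2_gt0 _ Hz); nra.
Qed.

Definition boundary_row (N : nat) (ell th : nat -> R) (L : option R) (z : Cx) : Cx * Cx :=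
  match L with
  | Some L0 => row0_transfer z (L0 - X ell N) (th N)
  | None => row0_slope z (th N)
  end.

Lemma lj_kappa N ell th L : th 0%nat = PI / 2 -> ~ in_piZ (th N) ->
  lj N ell th L (kappa N th) =
  match L with Some L0 => Some ((L0 - X ell N) * sin (th N) ^ 2) | None => None end.
Proof.
  intros Hth0 HthN; unfold lj, ellx; rewrite (kj_kappa N th Hth0 HthN).
  destruct (Nat.ltb_spec N N); [lia|]; destruct L; reflexivity.
Qed.

Lemma boundary_row_ratio N ell th L z : th 0%nat = PI / 2 -> ~ in_piZ (th N) ->
  match L with Some L0 => X ell N < L0 | None => True end -> Im z <> 0 ->
  ratio_at (boundary_row N ell th L z) (th N) (inv_mlz (lj N ell th L (kappa N th)) z) /\
  same_half_plane z (inv_mlz (lj N ell th L (kappa N th)) z).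
Proof.
  intros Hth0 HthN HL Hz.
  assert (Hs : sin (th N) <> 0) by (apply sin_neq0_notpiZ; auto).
  rewrite (lj_kappa N ell th L Hth0 HthN); split.
  - destruct L as [L0|]; unfold boundary_row.
    + apply row0_transfer_ratio; auto; [apply Cneq0_Im; auto | lra].
    + apply row0_slope_ratio; auto; apply Cneq0_Im; auto.
  - apply inv_mlz_same_half_plane; auto.
    destruct L as [L0|]; intros a E; inversion E; pose proof (pow2_gt0 _ Hs); nra.
Qed.

Section Limit.
Variables (N : nat) (ell th : nat -> R) (L : option R) (z : Cx)
  (U : R -> nat -> nat -> Cx).
Hypothesis HIE : solves_IE N ell th L z U.
Hypothesis Hell : forall k, (k < N)%nat -> 0 < ell k.
Hypothesis HL : match L with Some L0 => X ell N < L0 | None => True end.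

Notation V := (transfer_prod ell th z N).

Lemma U_row0_affine x : in_dom L x -> X ell N <= x ->
  let a := row_mul (Cone, Czero) V in
  let b := row_mul (row0_slope z (th N)) V in
  U x 0%nat 0%nat = affine (fst a) (fst b) (x - X ell N) /\
  U x 0%nat 1%nat = affine (snd a) (snd b) (x - X ell N).
Proof.
  intros Hx HxN a b.
  rewrite !(U_last_interval N ell th L z U HIE Hell HL x Hx HxN) by lia.
  rewrite !row0_transfer_mmul by lia; simpl Nat.eqb; cbv iota.
  unfold row0_transfer; rewrite row_mul_affine; auto.
Qed.

Lemma tends_to_L_boundary_row :
  snd (row_mul (boundary_row N ell th L z) V) <> Czero ->
  tends_to_L L (fun x => Cdiv (U x 0%nat 0%nat) (U x 0%nat 1%nat))
    (Cdiv (fst (row_mul (boundary_row N ell th L z) V))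
          (snd (row_mul (boundary_row N ell th L z) V))).
Proof.
  intros Hne; pose proof U_row0_affine as Hrow; cbv zeta in Hrow.
  set (a := row_mul (Cone, Czero) V); set (b := row_mul (row0_slope z (th N)) V).
  destruct L as [L0|]; unfold tends_to_L, boundary_row, row0_transfer in *;
    rewrite ?row_mul_affine in *; fold a b in Hne |- *; intros eps He.
  - destruct (affine_ratio_cont (fst a) (snd a) (fst b) (snd b) (L0 - X ell N) Hne eps He)
      as [del [Hdel Hlim]].
    exists (Rmin del (L0 - X ell N)); split; [apply Rmin_pos; lra|].
    intros x Hx Hxd.
    pose proof (Rmin_l del (L0 - X ell N)); pose proof (Rmin_r del (L0 - X ell N)).
    destruct (Hrow x Hx ltac:(lra)) as [E0 E1]; rewrite E0, E1.
    apply Hlim; destruct Hx as [_ Hx]; rewrite Rabs_left; lra.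
  - destruct (affine_ratio_at_infty (fst a) (snd a) (fst b) (snd b) Hne eps He)
      as [M [HM Hlim]].
    exists (X ell N + M); intros x Hx HxM.
    destruct (Hrow x Hx ltac:(lra)) as [E0 E1]; rewrite E0, E1.
    apply Hlim; lra.
Qed.

End Limit.

Theorem corollary4p2 (N : nat) (ell th : nat -> R) (L : option R)
  (Hth0 : th 0%nat = PI / 2)
  (Hell : forall k, (k < N)%nat -> 0 < ell k)
  (Hth : forall k, (k < N)%nat -> th k < th (S k) < th k + PI)
  (HL : match L with Some L0 => X ell N < L0 | None => True end)
  (HthN : ~ in_piZ (th N)) :
  forall (z : Cx), Im z <> 0 ->
  forall (U : R -> nat -> nat -> Cx), solves_IE N ell th L z U ->
  tends_to_L L (fun x => Cdiv (U x 0%nat 0%nat) (U x 0%nat 1%nat))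
    (cfrac N ell th L z (kappa N th) 0).
Proof.
  intros z Hz U HIE.
  destruct (boundary_row_ratio N ell th L z Hth0 HthN HL Hz) as [Hratio Hhalf].
  destruct (row_mul_transfer_prod_ratio N ell th L z Hth0 Hell Hth HthN Hz _ _ Hratio Hhalf)
    as [Hne Hcf].
  rewrite cfrac_cf_tail, Nat.add_0_l, <- Hcf.
  exact (tends_to_L_boundary_row N ell th L z U HIE Hell HL Hne).
Qed.
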